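(* For every LTOL formula $\varphi$ there is an alternating Büchi word automaton $A_\varphi$ over the alphabet $\Sigma\times\mathcal{O}$, where $\Sigma=2^{\mathcal{V}}$ and $\mathcal{O}=2^{\mathrm{obs}(\varphi)}$, such that $\bigcup_{w\in\mathcal{L}(A_\varphi)}\mathcal{L}(w)$ is exactly the set of computations satisfying $\varphi$.
   Context: Fix finite sets: $\mathcal{V}$ of Boolean state variables, $Ch$ of channels (containing $\star$), $D$ of Boolean data variables, $K$ of agent identities, $CV$ of Boolean common variables. An observation is $m=\langle ch,{\bf d},k,\pi\rangle$ with $ch\in Ch$, ${\bf d}$ an assignment to $D$, $k\in K$, and $\pi$ a set of assignments to $CV$; $M$ is the set of observations. Observation descriptors: $O::=cv\mid\neg cv\mid ch\mid\neg ch\mid k\mid\neg k\mid d\mid\neg d\mid\exists O\mid\forall O\mid O\vee O\mid O\wedge O$. Semantics for $m=\langle ch,{\bf d},k,\pi\rangle$: $m\models ch'$ iff $ch=ch'$; $m\models d'$ iff ${\bf d}(d')$ true; $m\models k'$ iff $k=k'$ (negations: the complements); $m\models cv$ iff every $c\in\pi$ satisfies $cv$; $m\models\neg cv$ iff some $c\in\pi$ falsifies $cv$; $m\models\exists O$ iff some $c\in\pi$ has $\langle ch,{\bf d},k,\{c\}\rangle\models O$; $m\models\forall O$ iff all $c\in\pi$ have $\langle ch,{\bf d},k,\{c\}\rangle\models O$; $\vee,\wedge$ as usual. LTOL formulas: $\phi::=v\mid\neg v\mid\phi\vee\phi\mid\phi\wedge\phi\mid\phi\,\mathcal{U}\,\phi\mid\phi\,\mathcal{R}\,\phi\mid\langle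 O\rangle\phi\mid[O]\phi$ with $v\in\mathcal{V}$. A computation is $\rho:\mathbb{N}\to 2^{\mathcal{V}}\times M$, $\rho(i)=(s_i,m_i)$; $\rho_{\geq i}$ is the suffix. $\rho_{\geq i}\models v$ iff $v\in s_i$; Boolean connectives, $\mathcal{U}$ and $\mathcal{R}$ as in LTL; $\rho_{\geq i}\models\langle O\rangle\phi$ iff $m_i\models O$ and $\rho_{\geq i+1}\models\phi$; $\rho_{\geq i}\models[O]\phi$ iff $m_i\models O$ implies $\rho_{\geq i+1}\models\phi$. $\rho$ satisfies $\varphi$ iff $\rho_{\geq0}\models\varphi$. $\mathrm{obs}(\varphi)$ is the set of descriptors $O$ such that $\langle O\rangle\psi$ or $[O]\psi$ is a subformula of $\varphi$. For a word $w=(\sigma_0,\varpi_0)(\sigma_1,\varpi_1)\dots\in(\Sigma\times\mathcal{O})^\omega$, a computation $\rho$ satisfies $w$ if for all $i$, $s_i=\sigma_i$ and for every $O\in\mathrm{obs}(\varphi)$, $m_i\models O$ iff $O\in\varpi_i$; $\mathcal{L}(w)$ is the set of computations satisfying $w$. An alternating Büchi word automaton over alphabet $\Gamma$ is $\langle\Gamma,Q,q_{in},\delta,F\rangle$ with $\delta:Q\times\Gamma\to\mathcal{B}^+(Q)$ (positive Boolean formulas over $Q$, including true/false); it accepts a word if there is a run tree (root labelled $q_{in}$, children of a node at depth $j$ labelled $q$ form a set satisfying $\delta(q,\text{$j$-th letter})$) all of whose infinite paths visit $F$ infinitely often. $\mathcal{L}(A)$ is the set of accepted words. *)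

From HB Require Import structures.
From mathcomp Require Import all_boot.
Set Implicit Arguments. Unset Strict Implicit. Unset Printing Implicit Defensive.

Section LTOL.
(* Finite sets of state variables, channels, data variables, agent identities,
   common variables. *)
Variables (V Ch D K CV : finType).

Definition obsv : Type :=
  (Ch * {ffun D -> bool} * K * {set {ffun CV -> bool}})%type.

Inductive descr : Type :=
| OCv of CV | ONCv of CV
| OCh of Ch | ONCh of Ch
| OK of K   | ONK of K
| OD of D   | OND of D
| OEx of descr | OAll of descr
| OOr of descr & descr | OAnd of descr & descr.

Fixpoint msat (m : obsv) (O : descr) : bool :=
  let: (ch, d, k, pi) := m in
  match O with
  | OCv cv => [forall c in pi, c cv]
  | ONCv cv => [exists c in pi, ~~ c cv]
  | OCh ch' => ch == ch'
  | ONCh ch' => ch != ch'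
  | OK k' => k == k'
  | ONK k' => k != k'
  | OD d' => d d'
  | OND d' => ~~ d d'
  | OEx O1 => [exists c in pi, msat (ch, d, k, [set c]) O1]
  | OAll O1 => [forall c in pi, msat (ch, d, k, [set c]) O1]
  | OOr O1 O2 => msat m O1 || msat m O2
  | OAnd O1 O2 => msat m O1 && msat m O2
  end.

Local Notation leafT := (Ch + (D + (K + CV)))%type.

Fixpoint enc (O : descr) : GenTree.tree leafT :=
  match O with
  | OCv c => GenTree.Node 0 [:: GenTree.Leaf (inr (inr (inr c)))]
  | ONCv c => GenTree.Node 1 [:: GenTree.Leaf (inr (inr (inr c)))]
  | OCh c => GenTree.Node 2 [:: GenTree.Leaf (inl c)]
  | ONCh c => GenTree.Node 3 [:: GenTree.Leaf (inl c)]
  | OK k => GenTree.Node 4 [:: GenTree.Leaf (inr (inr (inl k)))]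
  | ONK k => GenTree.Node 5 [:: GenTree.Leaf (inr (inr (inl k)))]
  | OD d => GenTree.Node 6 [:: GenTree.Leaf (inr (inl d))]
  | OND d => GenTree.Node 7 [:: GenTree.Leaf (inr (inl d))]
  | OEx O1 => GenTree.Node 8 [:: enc O1]
  | OAll O1 => GenTree.Node 9 [:: enc O1]
  | OOr O1 O2 => GenTree.Node 10 [:: enc O1; enc O2]
  | OAnd O1 O2 => GenTree.Node 11 [:: enc O1; enc O2]
  end.

Fixpoint dec (t : GenTree.tree leafT) : option descr :=
  match t with
  | GenTree.Node 0 [:: GenTree.Leaf (inr (inr (inr c)))] => Some (OCv c)
  | GenTree.Node 1 [:: GenTree.Leaf (inr (inr (inr c)))] => Some (ONCv c)
  | GenTree.Node 2 [:: GenTree.Leaf (inl c)] => Some (OCh c)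
  | GenTree.Node 3 [:: GenTree.Leaf (inl c)] => Some (ONCh c)
  | GenTree.Node 4 [:: GenTree.Leaf (inr (inr (inl k)))] => Some (OK k)
  | GenTree.Node 5 [:: GenTree.Leaf (inr (inr (inl k)))] => Some (ONK k)
  | GenTree.Node 6 [:: GenTree.Leaf (inr (inl d))] => Some (OD d)
  | GenTree.Node 7 [:: GenTree.Leaf (inr (inl d))] => Some (OND d)
  | GenTree.Node 8 [:: t1] => omap OEx (dec t1)
  | GenTree.Node 9 [:: t1] => omap OAll (dec t1)
  | GenTree.Node 10 [:: t1; t2] =>
      match dec t1, dec t2 with Some a, Some b => Some (OOr a b) | _, _ => None end
  | GenTree.Node 11 [:: t1; t2] =>
      match dec t1, dec t2 with Some a, Some b => Some (OAnd a b) | _, _ => None end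
  | _ => None
  end.

Lemma encK : pcancel enc dec.
Proof. by elim=> //= [O1 -> | O1 -> | O1 -> O2 -> | O1 -> O2 ->]. Qed.

End LTOL.

HB.instance Definition _ (Ch D K CV : finType) :=
  Countable.copy (descr Ch D K CV) (pcan_type (@encK Ch D K CV)).

Section LTOL2.
Variables (V Ch D K CV : finType).
Local Notation descr := (descr Ch D K CV).
Local Notation obsv := (obsv Ch D K CV).

Inductive ltol : Type :=
| FVar of V | FNVar of V
| FOr of ltol & ltol | FAnd of ltol & ltol
| FUntil of ltol & ltol | FRelease of ltol & ltol
| FDiam of descr & ltol | FBox of descr & ltol.

Definition computation := nat -> ({set V} * obsv)%type.

Fixpoint sat (rho : computation) (i : nat) (phi : ltol) : Prop :=
  match phi with
  | FVar v => v \in (rho i).1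
  | FNVar v => v \notin (rho i).1
  | FOr p q => sat rho i p \/ sat rho i q
  | FAnd p q => sat rho i p /\ sat rho i q
  | FUntil p q => exists j, i <= j /\ sat rho j q /\
                    forall k, i <= k -> k < j -> sat rho k p
  | FRelease p q => forall j, i <= j ->
                    sat rho j q \/ exists k, i <= k /\ k < j /\ sat rho k p
  | FDiam o p => msat (rho i).2 o /\ sat rho i.+1 p
  | FBox o p => msat (rho i).2 o -> sat rho i.+1 p
  end.

Definition satisfies (rho : computation) (phi : ltol) : Prop := sat rho 0 phi.

Fixpoint obs (phi : ltol) : seq descr :=
  match phi with
  | FVar _ | FNVar _ => [::]
  | FOr p q | FAnd p q | FUntil p q | FRelease p q => obs p ++ obs q
  | FDiam o p | FBox o p => o :: obs p
  end.

Definition letter (phi : ltol) : Type :=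
  ({set V} * {set seq_sub (obs phi)})%type.

Definition word (phi : ltol) := nat -> letter phi.

Definition sat_word (phi : ltol) (w : word phi) (rho : computation) : Prop :=
  forall i, (rho i).1 = (w i).1 /\
    forall o : seq_sub (obs phi), msat (rho i).2 (val o) = (o \in (w i).2).

End LTOL2.

Inductive pbf (Q : Type) : Type :=
| BTrue | BFalse | BAtom of Q | BAnd of pbf Q & pbf Q | BOr of pbf Q & pbf Q.
Arguments BTrue {Q}. Arguments BFalse {Q}.

Fixpoint pbf_sat (Q : Type) (S : Q -> Prop) (f : pbf Q) : Prop :=
  match f with
  | BTrue => True
  | BFalse => False
  | BAtom q => S q
  | BAnd f1 f2 => pbf_sat S f1 /\ pbf_sat S f2
  | BOr f1 f2 => pbf_sat S f1 \/ pbf_sat S f2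
  end.

Record ABW (Gamma : Type) := {
  abw_state : finType;
  abw_init : abw_state;
  abw_delta : abw_state -> Gamma -> pbf abw_state;
  abw_final : {set abw_state}
}.
Arguments abw_state {Gamma} a.
Arguments abw_init {Gamma} a.
Arguments abw_delta {Gamma} a _ _.
Arguments abw_final {Gamma} a.

(* A run tree: nodes are addresses x : seq nat in a prefix-closed set T,
   labelled by lab; node x has depth size x. *)
Definition run_tree (Gamma : Type) (A : ABW Gamma) (w : nat -> Gamma)
    (T : seq nat -> Prop) (lab : seq nat -> abw_state A) : Prop :=
  T [::] /\ lab [::] = abw_init A /\
  (forall x c, T (rcons x c) -> T x) /\
  (forall x, T x ->
     pbf_sat (fun q => exists c, T (rcons x c) /\ lab (rcons x c) = q)
             (abw_delta A (lab x) (w (size x)))).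

Arguments run_tree {Gamma} A w T lab.

Definition inf_path (T : seq nat -> Prop) (p : nat -> seq nat) : Prop :=
  p 0 = [::] /\ forall n, T (p n) /\ exists c, p n.+1 = rcons (p n) c.

Definition accepts (Gamma : Type) (A : ABW Gamma) (w : nat -> Gamma) : Prop :=
  exists T lab, run_tree A w T lab /\
    forall p, inf_path T p ->
      forall n, exists m, n <= m /\ lab (p m) \in abw_final A.
Arguments accepts {Gamma} A w.

(* The automaton is the classical alternating automaton for LTL, extended to
   the two modalities: its states are the subformulas of phi, a letter gives
   the state variables together with the truth values of the descriptors in
   obs(phi), and the accepting states are those not of the form p U q.

   If an accepted word describes rho, then by structural induction every
   state of the accepting run holds in rho at the depth where it occurs: an
   until that is never fulfilled would yield a branch that stays in that
   until state forever, which the Buchi condition forbids, and a release is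
   handled coinductively. Conversely, if rho satisfies phi, a run on the word
   of rho is obtained by only ever spawning formulas that hold at the next
   position; along any branch the spawned formulas never grow, so they
   eventually stabilise, and a stable until state contradicts the eventual
   fulfilment of its right argument. *)

From HB Require Import structures.
From mathcomp Require Import all_boot zify.
From Stdlib Require Import Classical ClassicalEpsilon.
Set Implicit Arguments. Unset Strict Implicit. Unset Printing Implicit Defensive.

Lemma pbf_sat_mono (Q : Type) (S1 S2 : Q -> Prop) (f : pbf Q) :
  (forall q, S1 q -> S2 q) -> pbf_sat S1 f -> pbf_sat S2 f.
Proof.
move=> S12; elim: f => [| |q|f1 IH1 f2 IH2|f1 IH1 f2 IH2] //=; first exact: S12.
- by case=> /IH1 ? /IH2.
- by case=> [/IH1|/IH2]; [left|right].
Qed.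

Lemma eventually_constant (T : Type) (h : T -> nat) (g : nat -> T) :
  (forall m, h (g m.+1) < h (g m) \/ g m.+1 = g m) ->
  forall n, exists2 N, n <= N & forall m, N <= m -> g m = g N.
Proof.
move=> step.
have mono m d : h (g (m + d)) < h (g m) \/ g (m + d) = g m.
  elim: d => [|d IH]; first by rewrite addn0; right.
  rewrite addnS; case: (step (m + d)) => [lt | ->] //.
  by left; case: IH => [lt' | <-] //; apply: ltn_trans lt'.
suff bounded k n : h (g n) < k -> exists2 N, n <= N & forall m, N <= m -> g m = g N.
  by move=> n; exact: (bounded (h (g n)).+1).
elim: k n => // k IH n /[!ltnS] hn.
case: (classic (forall d, g (n + d) = g n)) => [const | /not_all_ex_not [d neq]].
  by exists n => // m /subnKC <-.
case: (mono n d) => // lt.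
have [N le_N constN] := IH (n + d) (leq_trans lt hn).
by exists N => //; apply: leq_trans le_N; apply: leq_addr.
Qed.

Lemma buchi_no_rejecting_extendable (S : finType) (F : {set S})
    (T : seq nat -> Prop) (lab : seq nat -> S) (R : seq nat -> Prop) :
  (forall x c, T (rcons x c) -> T x) ->
  (forall p, inf_path T p -> forall n, exists m, n <= m /\ lab (p m) \in F) ->
  (forall y, R y -> T y) -> (forall y, R y -> exists c, R (rcons y c)) ->
  (forall y, R y -> lab y \notin F) -> forall y, ~ R y.
Proof.
move=> T_pre acc RT Rext Rrej y0 Ry0.
have T_take y n : T y -> T (take n y).
  elim/last_ind: y n => [|y c IH] n Ty; first by case: n.
  rewrite -cats1 take_cat; case: ifP => _; first exact/IH/(T_pre _ c).
  by case: (n - size y) => [|k] /=; rewrite ?cats0 ?cats1 //; apply: T_pre Ty.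
pose nxt y := rcons y (epsilon (inhabits 0) (fun c => R (rcons y c))).
have R_iter k : R (iter k nxt y0).
  elim: k => //= k IH; exact: (epsilon_spec (inhabits 0) (fun c => R _) (Rext _ IH)).
pose p n := if n <= size y0 then take n y0 else iter (n - size y0) nxt y0.
have p_iter m : size y0 <= m -> p m = iter (m - size y0) nxt y0.
  rewrite /p leq_eqVlt => /orP[/eqP <-|lt]; first by rewrite leqnn subnn take_size.
  by rewrite leqNgt lt.
have path_p : inf_path T p.
  split=> [|n]; first by rewrite /p take0.
  split; first by rewrite /p; case: leqP => _; [exact/T_take/RT | exact/RT].
  case: (ltnP n (size y0)) => [lt|ge].
    by exists (nth 0 y0 n); rewrite /p lt ltnW // (take_nth 0 lt).
  by rewrite !p_iter ?(leq_trans ge) // subSn //=; eexists.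
have [m [le_m Fm]] := acc p path_p (size y0).
by move: (Rrej _ (R_iter (m - size y0))); rewrite -p_iter // Fm.
Qed.

Section LtolCountable.
Variables (V Ch D K CV : finType).
Local Notation ltol := (ltol V Ch D K CV).
Local Notation descr := (descr Ch D K CV).

Fixpoint ltol_enc (f : ltol) : GenTree.tree (V + descr) :=
  match f with
  | FVar v => GenTree.Node 0 [:: GenTree.Leaf (inl v)]
  | FNVar v => GenTree.Node 1 [:: GenTree.Leaf (inl v)]
  | FOr p q => GenTree.Node 2 [:: ltol_enc p; ltol_enc q]
  | FAnd p q => GenTree.Node 3 [:: ltol_enc p; ltol_enc q]
  | FUntil p q => GenTree.Node 4 [:: ltol_enc p; ltol_enc q]
  | FRelease p q => GenTree.Node 5 [:: ltol_enc p; ltol_enc q]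
  | FDiam o p => GenTree.Node 6 [:: GenTree.Leaf (inr o); ltol_enc p]
  | FBox o p => GenTree.Node 7 [:: GenTree.Leaf (inr o); ltol_enc p]
  end.

Fixpoint ltol_dec (t : GenTree.tree (V + descr)) : option ltol :=
  let bin C t1 t2 :=
    if (ltol_dec t1, ltol_dec t2) is (Some p, Some q) then Some (C p q) else None in
  match t with
  | GenTree.Node 0 [:: GenTree.Leaf (inl v)] => Some (FVar _ _ _ _ v)
  | GenTree.Node 1 [:: GenTree.Leaf (inl v)] => Some (FNVar _ _ _ _ v)
  | GenTree.Node 2 [:: t1; t2] => bin (@FOr _ _ _ _ _) t1 t2
  | GenTree.Node 3 [:: t1; t2] => bin (@FAnd _ _ _ _ _) t1 t2
  | GenTree.Node 4 [:: t1; t2] => bin (@FUntil _ _ _ _ _) t1 t2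
  | GenTree.Node 5 [:: t1; t2] => bin (@FRelease _ _ _ _ _) t1 t2
  | GenTree.Node 6 [:: GenTree.Leaf (inr o); t1] => omap (FDiam o) (ltol_dec t1)
  | GenTree.Node 7 [:: GenTree.Leaf (inr o); t1] => omap (FBox o) (ltol_dec t1)
  | _ => None
  end.

Lemma ltol_encK : pcancel ltol_enc ltol_dec.
Proof. by elim=> //= [p -> q -> | p -> q -> | p -> q -> | p -> q -> | o p -> | o p ->]. Qed.

End LtolCountable.

HB.instance Definition _ (V Ch D K CV : finType) :=
  Countable.copy (ltol V Ch D K CV) (pcan_type (@ltol_encK V Ch D K CV)).

Section Semantics.
Variables (V Ch D K CV : finType) (rho : computation V Ch D K CV).
Local Notation ltol := (ltol V Ch D K CV).
Local Notation sat := (sat rho).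

Fixpoint fsize (f : ltol) : nat :=
  match f with
  | FOr p q | FAnd p q | FUntil p q | FRelease p q => (fsize p + fsize q).+1
  | FDiam _ p | FBox _ p => (fsize p).+1
  | _ => 1
  end.

Definition is_until (f : ltol) : bool := if f is FUntil _ _ then true else false.

Lemma until_unfold p q i :
  sat i (FUntil p q) -> ~ sat i q -> sat i p /\ sat i.+1 (FUntil p q).
Proof.
move=> [j [le_ij [qj pbefore]]] nqi.
have lt_ij : i < j by rewrite ltn_neqAle le_ij andbT; apply: contra_notN nqi => /eqP ->.
split; first exact: pbefore (leqnn i) lt_ij.
by exists j; split=> //; split=> // k lt_ik; apply/pbefore/ltnW.
Qed.

Lemma until_fold p q i :
  sat i q \/ (sat i p /\ sat i.+1 (FUntil p q)) -> sat i (FUntil p q).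
Proof.
case=> [qi | [pi [j [lt_ij [qj pbefore]]]]].
  by exists i; split=> //; split=> // k le_ik; rewrite ltnNge le_ik.
exists j; split; [exact: ltnW | split=> // k].
by rewrite leq_eqVlt => /orP[/eqP <- | /pbefore].
Qed.

Lemma release_unfold p q i :
  sat i (FRelease p q) -> sat i q /\ (sat i p \/ sat i.+1 (FRelease p q)).
Proof.
move=> rel; split.
  by case: (rel i (leqnn i)) => // [[k [le_ik []]]]; rewrite ltnNge le_ik.
case: (classic (sat i p)) => [pi | npi]; [by left | right].
move=> j lt_ij; case: (rel j (ltnW lt_ij)) => [|[k [le_ik [lt_kj pk]]]]; [by left | right].
exists k; split; last by split.
rewrite ltn_neqAle le_ik andbT.
by apply: contra_notN npi => /eqP ->.
Qed.

Lemma release_coind p q (P : nat -> Prop) :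
  (forall i, P i -> sat i q /\ (sat i p \/ P i.+1)) ->
  forall i, P i -> sat i (FRelease p q).
Proof.
move=> stepP.
have within d i : P i ->
    sat (i + d) q \/ exists k, i <= k /\ k < i + d /\ sat k p.
  elim: d i => [|d IH] i Pi; first by left; rewrite addn0; case: (stepP i Pi).
  case: (stepP i Pi) => _ [pi | Pi1].
    by right; exists i; rewrite leqnn addnS ltnS leq_addr.
  rewrite addnS -addSn; case: (IH _ Pi1) => [qid | [k [lt_ik [lt_kd pk]]]]; [by left | right].
  by exists k; split; [apply: ltnW | split].
by move=> i Pi j /subnKC <-; apply: within.
Qed.

(* The children that the run built from [rho] gives to a state [f] at depth
   [i]: a choice satisfying the transition formula of [f], made knowing [rho]
   so that only formulas true at position [i.+1] are spawned. *)
Fixpoint oblig (i : nat) (f g : ltol) : Prop :=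
  match f with
  | FVar _ | FNVar _ => False
  | FOr p q => (sat i p /\ oblig i p g) \/ (~ sat i p /\ oblig i q g)
  | FAnd p q => oblig i p g \/ oblig i q g
  | FUntil p q => (sat i q /\ oblig i q g) \/
                  (~ sat i q /\ (oblig i p g \/ g = FUntil p q))
  | FRelease p q => oblig i q g \/ (sat i p /\ oblig i p g) \/
                    (~ sat i p /\ g = FRelease p q)
  | FDiam _ p => g = p
  | FBox o p => msat (rho i).2 o /\ g = p
  end.

Lemma oblig_sat f g i : sat i f -> oblig i f g -> sat i.+1 g.
Proof.
elim: f i => [v|v|p IHp q IHq|p IHp q IHq|p IHp q IHq|p IHp q IHq|o p IHp|o p IHp] i /=.
- by move=> _ [].
- by move=> _ [].
- move=> spq [[pi ob] | [npi ob]]; first exact: IHp pi ob.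
  by case: spq => [/npi [] | qi]; apply: IHq qi ob.
- by move=> [pi qi] [ob | ob]; [apply: IHp ob | apply: IHq ob].
- move=> uq [[qi ob] | [nqi [ob | ->]]]; first exact: IHq ob.
    exact: IHp (until_unfold uq nqi).1 ob.
  exact: (until_unfold uq nqi).2.
- move=> /release_unfold [qi rest] [ob | [[pi ob] | [npi ->]]].
  + exact: IHq ob.
  + exact: IHp ob.
  + by case: rest.
- by move=> [_ pi] ->.
- by move=> box [om ->]; apply: box.
Qed.

Lemma oblig_fsize f g i : oblig i f g -> fsize g < fsize f \/ g = f.
Proof.
elim: f i => [v|v|p IHp q IHq|p IHp q IHq|p IHp q IHq|p IHp q IHq|o p IHp|o p IHp] i //=.
- by case=> [[_ /IHp] | [_ /IHq]] [lt | ->]; left; lia.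
- by case=> [/IHp | /IHq] [lt | ->]; left; lia.
- case=> [[_ /IHq] | [_ [/IHp | ->]]]; last by right.
  + by case=> [lt | ->]; left; lia.
  + by case=> [lt | ->]; left; lia.
- case=> [/IHq | [[_ /IHp] | [_ ->]]]; last by right.
  + by case=> [lt | ->]; left; lia.
  + by case=> [lt | ->]; left; lia.
- by move=> ->; left.
- by move=> [_ ->]; left.
Qed.

Lemma oblig_until_self p q i : oblig i (FUntil p q) (FUntil p q) -> ~ sat i q.
Proof.
case=> [[_ /oblig_fsize [/= | eq_q]] | [nqi _]] //; first lia.
by have /= := congr1 fsize eq_q; lia.
Qed.

Lemma oblig_chain_not_until (g : nat -> ltol) :
  (forall m, sat m (g m)) -> (forall m, oblig m (g m) (g m.+1)) ->
  forall n, exists m, n <= m /\ ~~ is_until (g m).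
Proof.
move=> sat_g ob_g n.
have [N le_nN constN] :=
  eventually_constant (fun m => oblig_fsize (ob_g m)) n.
case gN: (g N) (sat_g N) => [||||p q|||] /=; try by exists N; rewrite gN.
move=> [j [le_Nj [qj _]]].
have gj k : N <= k -> g k = FUntil p q by move/constN; rewrite gN.
have := ob_g j; rewrite gj // gj ?(leq_trans le_Nj) //.
by move/oblig_until_self.
Qed.

End Semantics.

Lemma cons_subset (T : eqType) (x : T) (s1 s : seq T) :
  {subset x :: s1 <= s} -> {subset s1 <= s}.
Proof. by move=> sub y y_s1; apply: sub; rewrite in_cons y_s1 orbT. Qed.

Lemma cons_cat_subset (T : eqType) (x : T) (s1 s2 s : seq T) :
  {subset x :: s1 ++ s2 <= s} -> {subset s1 <= s} /\ {subset s2 <= s}.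
Proof.
move=> /cons_subset sub; split=> y y_s; apply: sub; by rewrite mem_cat y_s ?orbT.
Qed.

Section Automaton.
Variables (V Ch D K CV : finType) (phi : ltol V Ch D K CV).
Local Notation ltol := (ltol V Ch D K CV).
Local Notation descr := (descr Ch D K CV).

Fixpoint subf (f : ltol) : seq ltol :=
  f :: match f with
       | FOr p q | FAnd p q | FUntil p q | FRelease p q => subf p ++ subf q
       | FDiam _ p | FBox _ p => subf p
       | _ => [::]
       end.

Lemma subf_refl f : f \in subf f.
Proof. by case: f => *; apply: mem_head. Qed.

Lemma subf_trans f g : g \in subf f -> {subset subf g <= subf f}.
Proof.
elim: f => [v|v|p IHp q IHq|p IHp q IHq|p IHp q IHq|p IHp q IHq|o p IHp|o p IHp] /=;
  rewrite in_cons => /orP[/eqP -> // | ]; rewrite ?mem_cat //.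
all: try by case/orP=> [/IHp | /IHq] sub h /sub h_f; rewrite in_cons mem_cat h_f ?orbT.
all: by move=> /IHp sub h /sub h_f; rewrite in_cons h_f orbT.
Qed.

Lemma obs_subf f g : g \in subf f -> {subset obs g <= obs f}.
Proof.
elim: f => [v|v|p IHp q IHq|p IHp q IHq|p IHp q IHq|p IHp q IHq|o p IHp|o p IHp] /=;
  rewrite in_cons => /orP[/eqP -> // | ]; rewrite ?mem_cat //.
all: try by case/orP=> [/IHp | /IHq] sub o' /sub; rewrite mem_cat => ->; rewrite ?orbT.
all: by move=> /IHp sub o' /sub; rewrite in_cons => ->; rewrite orbT.
Qed.

Definition state := seq_sub (subf phi).

Definition init : state := SeqSub (subf_refl phi).

Definition goto (f : ltol) : pbf state := BAtom (insubd init f).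

Lemma val_goto f : f \in subf phi -> val (insubd init f) = f.
Proof. exact: insubdK. Qed.

Definition observed (o : descr) (a : letter phi) : bool :=
  [exists x : seq_sub (obs phi), (x \in a.2) && (val x == o)].

Fixpoint trans (f : ltol) (a : letter phi) : pbf state :=
  match f with
  | FVar v => if v \in a.1 then BTrue else BFalse
  | FNVar v => if v \in a.1 then BFalse else BTrue
  | FOr p q => BOr (trans p a) (trans q a)
  | FAnd p q => BAnd (trans p a) (trans q a)
  | FUntil p q => BOr (trans q a) (BAnd (trans p a) (goto (FUntil p q)))
  | FRelease p q => BAnd (trans q a) (BOr (trans p a) (goto (FRelease p q)))
  | FDiam o p => if observed o a then goto p else BFalse
  | FBox o p => if observed o a then goto p else BTrue
  end.

Definition ltol_abw : ABW (letter phi) :=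
  {| abw_state := state; abw_init := init;
     abw_delta := fun s a => trans (val s) a;
     abw_final := [set s : state | ~~ is_until (val s)] |}.

Lemma observedE (w : word phi) rho i o :
  sat_word w rho -> o \in obs phi -> observed o (w i) = msat (rho i).2 o.
Proof.
move=> /(_ i) [_ obsE] o_phi; apply/existsP/idP => [[x /andP[x_w /eqP <-]] | m_o].
  by rewrite obsE.
by exists (SeqSub o_phi); rewrite /= eqxx andbT -obsE.
Qed.

Section Soundness.
Variables (rho : computation V Ch D K CV) (w : word phi).
Variables (T : seq nat -> Prop) (lab : seq nat -> state).
Hypotheses (w_rho : sat_word w rho) (run : run_tree ltol_abw w T lab).
Hypothesis acc :
  forall p, inf_path T p -> forall n, exists m, n <= m /\ lab (p m) \in abw_final ltol_abw.

Definition child_labels (x : seq nat) (s : state) : Prop :=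
  exists c, T (rcons x c) /\ lab (rcons x c) = s.

Lemma run_pre x c : T (rcons x c) -> T x.
Proof. by case: run => _ [_ [pre _]]; apply: pre. Qed.

Lemma run_trans x : T x -> pbf_sat (child_labels x) (trans (val (lab x)) (w (size x))).
Proof. by case: run => _ [_ [_ delta]]; apply: delta. Qed.

Definition run_sound (f : ltol) : Prop :=
  forall x, T x -> pbf_sat (child_labels x) (trans f (w (size x))) -> sat rho (size x) f.

Lemma run_sound_goto f x :
  f \in subf phi -> run_sound f -> pbf_sat (child_labels x) (goto f) -> sat rho (size x).+1 f.
Proof.
move=> f_phi snd_f [c [Tc lab_c]]; rewrite -(size_rcons x c); apply: snd_f (Tc) _.
by rewrite -(val_goto f_phi) -lab_c; apply: run_trans.
Qed.

Lemma run_sound_until p q :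
  FUntil p q \in subf phi -> run_sound p -> run_sound q -> run_sound (FUntil p q).
Proof.
move=> u_phi snd_p snd_q.
pose R y := [/\ T y, val (lab y) = FUntil p q & ~ sat rho (size y) (FUntil p q)].
have step y : T y -> pbf_sat (child_labels y) (trans (FUntil p q) (w (size y))) ->
    ~ sat rho (size y) (FUntil p q) -> exists c, R (rcons y c).
  move=> Ty [tq | [tp [c [Tc lab_c]]]] nu; first by case: nu; apply/until_fold; left; apply: snd_q.
  exists c; split; rewrite ?lab_c ?val_goto ?size_rcons // => u1.
  by apply: nu; apply: until_fold; right; split=> //; apply: snd_p.
move=> x Tx tx; apply: NNPP => nu; have [c Rc] := step x Tx tx nu.
apply: (buchi_no_rejecting_extendable run_pre acc _ _ _ Rc)
  => [y [] | y [Ty lab_y nu_y] | y [_ lab_y _]] //.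
- by apply: step nu_y => //; have := run_trans Ty; rewrite lab_y.
- by rewrite inE lab_y.
Qed.

Lemma run_sound_release p q :
  FRelease p q \in subf phi -> run_sound p -> run_sound q -> run_sound (FRelease p q).
Proof.
move=> r_phi snd_p snd_q x Tx tx.
pose P i := exists2 y, T y /\ size y = i &
  pbf_sat (child_labels y) (trans (FRelease p q) (w (size y))).
apply: (release_coind (P := P)); last by exists x.
move=> _ [y [Ty <-] [tq tpr]]; split; first exact: snd_q.
case: tpr => [tp | [c [Tc lab_c]]]; [by left; apply: snd_p | right].
exists (rcons y c); first by rewrite size_rcons.
by rewrite -(val_goto r_phi) -lab_c; apply: run_trans.
Qed.

Lemma run_sound_subf f : {subset subf f <= subf phi} -> run_sound f.
Proof.
elim: f => [v|v|p IHp q IHq|p IHp q IHq|p IHp q IHq|p IHp q IHq|o p IHp|o p IHp] f_phi.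
- by move=> x _ /=; have [-> _] := w_rho (size x); case: ifP.
- by move=> x _ /=; have [-> _] := w_rho (size x); case: ifP.
- have [/IHp snd_p /IHq snd_q] := cons_cat_subset f_phi.
  by move=> x Tx [tp | tq]; [left; apply: snd_p | right; apply: snd_q].
- have [/IHp snd_p /IHq snd_q] := cons_cat_subset f_phi.
  by move=> x Tx [tp tq]; split; [apply: snd_p | apply: snd_q].
- have [/IHp snd_p /IHq snd_q] := cons_cat_subset f_phi.
  exact: run_sound_until (f_phi _ (mem_head _ _)) snd_p snd_q.
- have [/IHp snd_p /IHq snd_q] := cons_cat_subset f_phi.
  exact: run_sound_release (f_phi _ (mem_head _ _)) snd_p snd_q.
- have sub_p := cons_subset f_phi.
  have o_phi : o \in obs phi := obs_subf (f_phi _ (mem_head _ _)) (mem_head _ _).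
  move=> x Tx /=; rewrite (observedE _ w_rho o_phi); case: ifP => // _ tp.
  by split=> //; apply: run_sound_goto (IHp sub_p) tp; apply: sub_p (subf_refl p).
- have sub_p := cons_subset f_phi.
  have o_phi : o \in obs phi := obs_subf (f_phi _ (mem_head _ _)) (mem_head _ _).
  move=> x Tx /=; rewrite (observedE _ w_rho o_phi); case: ifP => _ tp // _.
  by apply: run_sound_goto (IHp sub_p) tp; apply: sub_p (subf_refl p).
Qed.

Lemma accepting_run_sat : satisfies rho phi.
Proof.
have [T_nil [lab_nil _]] := run.
apply: (run_sound_subf (fun g (g_phi : g \in subf phi) => g_phi) T_nil).
by have := run_trans T_nil; rewrite lab_nil.
Qed.

End Soundness.

Section Completeness.
Variable rho : computation V Ch D K CV.

Definition word_of : word phi :=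
  fun i => ((rho i).1, [set o : seq_sub (obs phi) | msat (rho i).2 (val o)]).

Lemma word_ofP : sat_word word_of rho.
Proof. by move=> i; split=> // o; rewrite inE. Qed.

Lemma oblig_sat_trans f i : {subset subf f <= subf phi} -> sat rho i f ->
  pbf_sat (fun s : state => oblig rho i f (val s)) (trans f (word_of i)).
Proof.
elim: f i => [v|v|p IHp q IHq|p IHp q IHq|p IHp q IHq|p IHp q IHq|o p IHp|o p IHp] i f_phi /=.
- by rewrite /word_of /= => ->.
- by rewrite /word_of /= => /negbTE ->.
- have [sub_p sub_q] := cons_cat_subset f_phi.
  case: (classic (sat rho i p)) => [pi _ | npi [//| qi]].
    by left; apply: pbf_sat_mono (IHp _ sub_p pi) => s; left.
  by right; apply: pbf_sat_mono (IHq _ sub_q qi) => s; right.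
- have [sub_p sub_q] := cons_cat_subset f_phi.
  move=> [pi qi]; split.
    by apply: pbf_sat_mono (IHp _ sub_p pi) => s; left.
  by apply: pbf_sat_mono (IHq _ sub_q qi) => s; right.
- have [sub_p sub_q] := cons_cat_subset f_phi.
  move=> u; case: (classic (sat rho i q)) => [qi | nqi].
    by left; apply: pbf_sat_mono (IHq _ sub_q qi) => s; left.
  have [pi _] := until_unfold u nqi.
  right; split; first by apply: pbf_sat_mono (IHp _ sub_p pi) => s ob; right; split=> //; left.
  by right; split=> //; right; rewrite val_goto //; apply: f_phi (mem_head _ _).
- have [sub_p sub_q] := cons_cat_subset f_phi.
  move=> /release_unfold [qi _]; split.
    by apply: pbf_sat_mono (IHq _ sub_q qi) => s; left.
  case: (classic (sat rho i p)) => [pi | npi].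
    by left; apply: pbf_sat_mono (IHp _ sub_p pi) => s ob; right; left.
  by right; right; right; split=> //; rewrite val_goto //; apply: f_phi (mem_head _ _).
- have o_phi : o \in obs phi := obs_subf (f_phi _ (mem_head _ _)) (mem_head _ _).
  rewrite (observedE _ word_ofP o_phi) => -[-> _] /=.
  by rewrite val_goto //; apply: (cons_subset f_phi) (subf_refl p).
- have o_phi : o \in obs phi := obs_subf (f_phi _ (mem_head _ _)) (mem_head _ _).
  rewrite (observedE _ word_ofP o_phi); case: ifP => //= _ _; split=> //.
  by rewrite val_goto //; apply: (cons_subset f_phi) (subf_refl p).
Qed.

(* In the run built below, a node [rcons y c] is labelled [state_of c]: child
   indices encode states through [pickle]. *)
Definition state_of (c : nat) : state := odflt init (unpickle c).

Lemma state_of_pickle s : state_of (pickle s) = s.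
Proof. by rewrite /state_of pickleK. Qed.

Fixpoint chain (i : nat) (s : state) (y : seq nat) : Prop :=
  if y is c :: y' then oblig rho i (val s) (val (state_of c)) /\ chain i.+1 (state_of c) y'
  else True.

Lemma chain_rcons i s y c :
  chain i s (rcons y c) <->
  chain i s y /\ oblig rho (i + size y) (val (last s (map state_of y))) (val (state_of c)).
Proof.
elim: y i s => [|c' y IH] i s /=; first by rewrite addn0; tauto.
by rewrite IH addSnnS; tauto.
Qed.

Lemma chain_sat i s y : sat rho i (val s) -> chain i s y ->
  sat rho (i + size y) (val (last s (map state_of y))).
Proof.
elim: y i s => [|c y IH] i s /=; first by rewrite addn0.
by move=> si [ob ch]; rewrite -addSnnS; apply: IH ch; apply: oblig_sat ob.
Qed.

Definition run_lab (y : seq nat) : state := last init (map state_of y).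

Lemma run_lab_rcons y c : run_lab (rcons y c) = state_of c.
Proof. by rewrite /run_lab map_rcons last_rcons. Qed.

Hypothesis rho_phi : satisfies rho phi.

Lemma run_lab_sat y : chain 0 init y -> sat rho (size y) (val (run_lab y)).
Proof. exact: chain_sat. Qed.

Lemma chain_run_tree : run_tree ltol_abw word_of (chain 0 init) run_lab.
Proof.
split=> //; split=> //; split=> [x c /chain_rcons [] // | x ch].
apply: pbf_sat_mono (oblig_sat_trans (subf_trans (ssvalP (run_lab x))) (run_lab_sat ch)).
move=> s ob; exists (pickle s); rewrite run_lab_rcons state_of_pickle.
by split=> //; apply/chain_rcons; rewrite state_of_pickle.
Qed.

Lemma chain_accepting p : inf_path (chain 0 init) p ->
  forall n, exists m, n <= m /\ run_lab (p m) \in abw_final ltol_abw.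
Proof.
move=> [p0 p_step].
have size_p m : size (p m) = m.
  elim: m => [|m IH]; first by rewrite p0.
  by have [_ [c ->]] := p_step m; rewrite size_rcons IH.
pose g m := val (run_lab (p m)).
have sat_g m : sat rho m (g m).
  by rewrite -{1}(size_p m); apply/run_lab_sat/(p_step m).1.
have oblig_g m : oblig rho m (g m) (g m.+1).
  have [_ [c p_c]] := p_step m; have [ch _] := p_step m.+1.
  by move: ch; rewrite /g p_c run_lab_rcons => /chain_rcons [_]; rewrite size_p.
move=> n; have [m [le_nm not_until]] := oblig_chain_not_until sat_g oblig_g n.
by exists m; rewrite inE.
Qed.

End Completeness.

End Automaton.

Theorem mainTheorem5 (V Ch D K CV : finType) (star : Ch) (phi : ltol V Ch D K CV) :
  exists A : ABW (letter phi),
    forall rho : computation V Ch D K CV,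
      (exists w : word phi, accepts A w /\ sat_word w rho) <-> satisfies rho phi.
Proof.
exists (ltol_abw phi) => rho; split.
  by move=> [w [[T [lab [run acc]]] w_rho]]; exact: accepting_run_sat w_rho run acc.
move=> rho_phi; exists (word_of phi rho); split; last exact: word_ofP.
exists (chain rho 0 (init phi)), (run_lab phi).
by split; [apply: chain_run_tree | apply: chain_accepting].
Qed.
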